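(* Let $(X,d)$ be a geodesic metric space with basepoint $x_0$, and let $(T_X,d^* )$ be its end-approximating tree. Let $x,y\in X$ and $r\in[0,\infty)$. Then $x$ and $y$ lie in the same path component of $X\setminus B(x_0,r)$ if and only if $([x],[y])^*_{[x_0]}>r$.
   Context: $B(x_0,r)$ is the closed ball. With $(x,y)_{x_0}=\frac12(d(x_0,x)+d(x_0,y)-d(x,y))$, let $(x,y)'_{x_0}=\sup\min_{1\leqslant i\leqslant n-1}(x_i,x_{i+1})_{x_0}$, the supremum over all finite sequences $x=x_1,\ldots,x_n=y$ in $X$, and $d'(x,y)=d(x_0,x)+d(x_0,y)-2(x,y)'_{x_0}$. The end-approximating tree is $T_X=X/\sim$, $x\sim y$ iff $d'(x,y)=0$, with metric $d^*([x],[y])=d'(x,y)$, and $([x],[y])^*_{[x_0]}=\frac12(d^*([x_0],[x])+d^*([x_0],[y])-d^*([x],[y]))$ is the Gromov product in $T_X$ (it equals $(x,y)'_{x_0}$). *)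

From Stdlib Require Import Reals List.
From Coquelicot Require Import Coquelicot.
Open Scope R_scope.

Section MetricDefs.
Context {X : Type} (d : X -> X -> R).

Definition is_metric : Prop :=
  (forall x y, 0 <= d x y) /\
  (forall x y, d x y = 0 <-> x = y) /\
  (forall x y, d x y = d y x) /\
  (forall x y z, d x z <= d x y + d y z).

Definition geodesic : Prop :=
  forall a b : X, exists g : R -> X,
    g 0 = a /\ g (d a b) = b /\
    forall s t, 0 <= s <= d a b -> 0 <= t <= d a b -> d (g s) (g t) = Rabs (s - t).

Definition path_continuous (p : R -> X) : Prop :=
  forall t, 0 <= t <= 1 -> forall eps, 0 < eps -> exists delta, 0 < delta /\
    forall s, 0 <= s <= 1 -> Rabs (s - t) < delta -> d (p s) (p t) < eps.

Definition same_path_component (S : X -> Prop) (x y : X) : Prop :=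
  exists p : R -> X, path_continuous p /\ p 0 = x /\ p 1 = y /\
    forall t, 0 <= t <= 1 -> S (p t).

Definition closed_ball (x0 : X) (r : R) (z : X) : Prop := d x0 z <= r.

Definition ball_complement (x0 : X) (r : R) (z : X) : Prop := ~ closed_ball x0 r z.

Definition gromov (x0 x y : X) : R := (d x0 x + d x0 y - d x y) / 2.

(* min_{i} (x_i, x_{i+1})_{x0} along the sequence a :: l ++ [b] *)
Fixpoint chain_min (x0 a : X) (l : list X) (b : X) : R :=
  match l with
  | nil => gromov x0 a b
  | c :: l' => Rmin (gromov x0 a c) (chain_min x0 c l' b)
  end.

Definition chain_values (x0 x y : X) (v : R) : Prop :=
  exists l : list X, v = chain_min x0 x l y.

(* (x,y)'_{x0} : supremum of chain_values (finite since bounded by d(x0,x)) *)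
Definition gromov' (x0 x y : X) : R := real (Lub_Rbar (chain_values x0 x y)).

(* d'(x,y) = d(x0,x) + d(x0,y) - 2 (x,y)'_{x0} ; this is d*([x],[y]) on T_X *)
Definition dprime (x0 x y : X) : R := d x0 x + d x0 y - 2 * gromov' x0 x y.

(* Gromov product ([x],[y])^*_{[x0]} in T_X, computed via d*([a],[b]) = d'(a,b) *)
Definition tree_gromov (x0 x y : X) : R :=
  (dprime x0 x0 x + dprime x0 x0 y - dprime x0 x y) / 2.

End MetricDefs.

(* Since (x,y)'_{x0} is a supremum of chain minima and (x0,z)'_{x0} = 0, the
   inequality ([x],[y])^*_{[x0]} > r says exactly that some chain
   x = x_1, ..., x_n = y has all products (x_i, x_{i+1})_{x0} > r.  Such a chain
   yields a path outside B(x0,r), because every point z of a geodesic from a to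
   b satisfies d(x0,z) >= (a,b)_{x0}.  Conversely, two close points on a path
   outside the ball have Gromov product > r, so the parameters t for which x and
   p(t) are joined by such a chain form an open and closed subset of [0,1]. *)

From Stdlib Require Import Reals List Lra Classical.
From Coquelicot Require Import Coquelicot.
Open Scope R_scope.

Lemma unit_interval_locally_constant (P : R -> Prop) :
  P 0 ->
  (forall t, 0 <= t <= 1 -> exists delta, 0 < delta /\
     forall s, 0 <= s <= 1 -> Rabs (s - t) < delta -> (P s <-> P t)) ->
  P 1.
Proof.
  intros P0 Hloc.
  set (A t := 0 <= t <= 1 /\ forall s, 0 <= s <= t -> P s).
  assert (A0 : A 0).
  { split; [lra|]. intros s Hs; now replace s with 0 by lra. }
  assert (Abound : bound A) by (exists 1; intros t [Ht _]; lra).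
  destruct (completeness A Abound (ex_intro _ 0 A0)) as [m [Hub Hlub]].
  assert (Hm0 : 0 <= m) by now apply Hub.
  assert (Hm1 : m <= 1) by (apply Hlub; intros t [Ht _]; lra).
  destruct (Hloc m (conj Hm0 Hm1)) as [delta [Hdelta Hm]].
  assert (Hnear : exists a, A a /\ m - delta < a).
  { apply not_all_not_ex; intros Hn.
    assert (m <= m - delta); [|lra].
    apply Hlub; intros t Ht; apply Rnot_lt_le; intros Hlt; now apply (Hn t). }
  destruct Hnear as [a [[Ha01 Aa] Ha]].
  assert (a <= m) by (apply Hub; now split).
  assert (Pm : P m).
  { apply (Hm a Ha01); [apply Rabs_def1; lra | apply Aa; lra]. }
  set (b := Rmin (m + delta / 2) 1).
  assert (Hb : m <= b <= 1) by (split; [apply Rmin_glb | apply Rmin_r]; lra).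
  assert (Hbm : b <= m + delta / 2) by apply Rmin_l.
  assert (Ab : A b).
  { split; [lra|]. intros s Hs.
    destruct (Rle_dec s a); [apply Aa; lra|].
    apply (Hm s); [lra | | exact Pm].
    apply Rabs_def1; lra. }
  assert (b <= m) by now apply Hub.
  apply Ab; split; [lra|].
  unfold b in *; destruct (Rle_dec (m + delta / 2) 1).
  - rewrite Rmin_left in * by lra; lra.
  - rewrite Rmin_right in * by lra; lra.
Qed.

Section Metric.
Context {X : Type} (d : X -> X -> R).
Hypothesis Hmetric : is_metric d.

Lemma dist_ge0 a b : 0 <= d a b.
Proof. apply (proj1 Hmetric). Qed.

Lemma dist_xx a : d a a = 0.
Proof. apply (proj1 (proj2 Hmetric)); reflexivity. Qed.

Lemma dist_sym a b : d a b = d b a.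
Proof. apply (proj1 (proj2 (proj2 Hmetric))). Qed.

Lemma dist_triangle a b c : d a c <= d a b + d b c.
Proof. apply (proj2 (proj2 (proj2 Hmetric))). Qed.

Lemma gromov_sym x0 a b : gromov d x0 a b = gromov d x0 b a.
Proof. unfold gromov; rewrite (dist_sym a b); lra. Qed.

Lemma gromov_xx x0 a : gromov d x0 a a = d x0 a.
Proof. unfold gromov; rewrite dist_xx; field. Qed.

Lemma gromov_le_dist x0 a b : gromov d x0 a b <= d x0 a.
Proof. unfold gromov; pose proof (dist_triangle x0 a b); lra. Qed.

Lemma gromov_le_dist_between x0 a b z :
  d a z + d z b = d a b -> gromov d x0 a b <= d x0 z.
Proof.
  intros Hz; unfold gromov.
  pose proof (dist_triangle x0 z a); pose proof (dist_triangle x0 z b).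
  rewrite (dist_sym z a) in *; lra.
Qed.

Lemma gromov_gt_of_close x0 r a b : d a b < d x0 b - r -> gromov d x0 a b > r.
Proof. intros Hab; unfold gromov; pose proof (dist_triangle x0 a b); lra. Qed.


Definition continuous_on (a b : R) (q : R -> X) : Prop :=
  forall t, a <= t <= b -> forall eps, 0 < eps -> exists delta, 0 < delta /\
    forall s, a <= s <= b -> Rabs (s - t) < delta -> d (q s) (q t) < eps.

Lemma continuous_on_ext a b q1 q2 :
  (forall t, a <= t <= b -> q1 t = q2 t) -> continuous_on a b q1 -> continuous_on a b q2.
Proof.
  intros E C t Ht eps Heps.
  destruct (C t Ht eps Heps) as [delta [Hdelta Hq]].
  exists delta; split; [exact Hdelta|].
  intros s Hs Hst; rewrite <- !E by assumption; auto.
Qed.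

Lemma continuous_on_rescale a b q :
  a < b -> continuous_on 0 1 q -> continuous_on a b (fun t => q ((t - a) / (b - a))).
Proof.
  intros Hab C t Ht eps Heps; unfold Rdiv.
  set (k := / (b - a)).
  assert (Hk : 0 < k) by (apply Rinv_0_lt_compat; lra).
  assert (Hkb : (b - a) * k = 1) by (apply Rinv_r; lra).
  assert (Hunit : forall s, a <= s <= b -> 0 <= (s - a) * k <= 1) by (intros; nra).
  destruct (C _ (Hunit t Ht) eps Heps) as [delta [Hdelta Hq]].
  exists (delta * (b - a)); split; [nra|].
  intros s Hs Hst; apply Hq; [now apply Hunit|].
  replace ((s - a) * k - (t - a) * k) with ((s - t) * k) by ring.
  rewrite Rabs_mult, (Rabs_pos_eq k) by lra.
  nra.
Qed.

Lemma dist_lt_half_sum a b c eps : d a b < eps / 2 -> d b c < eps / 2 -> d a c < eps.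
Proof. pose proof (dist_triangle a b c); lra. Qed.

Lemma continuous_on_paste a m b q :
  a <= m <= b -> continuous_on a m q -> continuous_on m b q -> continuous_on a b q.
Proof.
  intros Hm Cl Cr t Ht eps Heps.
  assert (Heps2 : 0 < eps / 2) by lra.
  destruct (Rle_lt_dec t m) as [Htm|Hmt].
  - destruct (Cl t ltac:(lra) _ Heps2) as [dt [Hdt Ht']].
    destruct (Cr m ltac:(lra) _ Heps2) as [dm [Hdm Hm']].
    exists (Rmin dt dm); split; [now apply Rmin_glb_lt|].
    intros s Hs Hst; pose proof (Rmin_l dt dm); pose proof (Rmin_r dt dm).
    apply Rabs_def2 in Hst.
    destruct (Rle_lt_dec s m).
    + apply Rlt_trans with (eps / 2); [apply Ht'; try apply Rabs_def1|]; lra.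
    + apply dist_lt_half_sum with (q m).
      * apply Hm'; [|apply Rabs_def1]; lra.
      * apply Ht'; [|apply Rabs_def1]; lra.
  - destruct (Cr t ltac:(lra) _ Heps2) as [dt [Hdt Ht']].
    destruct (Cl m ltac:(lra) _ Heps2) as [dm [Hdm Hm']].
    exists (Rmin dt dm); split; [now apply Rmin_glb_lt|].
    intros s Hs Hst; pose proof (Rmin_l dt dm); pose proof (Rmin_r dt dm).
    apply Rabs_def2 in Hst.
    destruct (Rle_lt_dec m s).
    + apply Rlt_trans with (eps / 2); [apply Ht'; try apply Rabs_def1|]; lra.
    + apply dist_lt_half_sum with (q m).
      * apply Hm'; [|apply Rabs_def1]; lra.
      * apply Ht'; [|apply Rabs_def1]; lra.
Qed.

Definition path_concat (p1 p2 : R -> X) (t : R) : X :=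
  if Rle_dec t (1 / 2) then p1 (2 * t) else p2 (2 * t - 1).

Lemma path_continuous_concat p1 p2 :
  path_continuous d p1 -> path_continuous d p2 -> p1 1 = p2 0 ->
  path_continuous d (path_concat p1 p2).
Proof.
  intros C1 C2 E.
  apply (continuous_on_paste 0 (1 / 2) 1); [lra| |].
  - apply (continuous_on_ext _ _ (fun t => p1 ((t - 0) / (1 / 2 - 0)))).
    + intros t Ht; unfold path_concat.
      destruct Rle_dec; [|lra].
      f_equal; field.
    + apply continuous_on_rescale; [lra | exact C1].
  - apply (continuous_on_ext _ _ (fun t => p2 ((t - 1 / 2) / (1 - 1 / 2)))).
    + intros t Ht; unfold path_concat.
      destruct Rle_dec.
      * replace t with (1 / 2) by lra.
        replace ((1 / 2 - 1 / 2) / (1 - 1 / 2)) with 0 by field.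
        replace (2 * (1 / 2)) with 1 by field.
        now rewrite E.
      * f_equal; field.
    + apply continuous_on_rescale; [lra | exact C2].
Qed.

Lemma same_path_component_trans (S : X -> Prop) a b c :
  same_path_component d S a b -> same_path_component d S b c ->
  same_path_component d S a c.
Proof.
  intros [p1 [C1 [A1 [B1 S1]]]] [p2 [C2 [A2 [B2 S2]]]].
  exists (path_concat p1 p2); repeat split.
  - apply path_continuous_concat; [exact C1 | exact C2 | congruence].
  - unfold path_concat; destruct Rle_dec; [|lra]. now rewrite Rmult_0_r.
  - unfold path_concat; destruct Rle_dec; [lra|]. now replace (2 * 1 - 1) with 1 by ring.
  - intros t Ht; unfold path_concat; destruct Rle_dec; [apply S1 | apply S2]; lra.
Qed.

Lemma geodesic_segment_path (Hgeod : geodesic d) a b :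
  exists p, path_continuous d p /\ p 0 = a /\ p 1 = b /\
    forall t, 0 <= t <= 1 -> d a (p t) + d (p t) b = d a b.
Proof.
  destruct (Hgeod a b) as [g [G0 [G1 Gi]]].
  set (D := d a b) in *.
  assert (HD : 0 <= D) by apply dist_ge0.
  exists (fun t => g (t * D)); repeat split.
  - intros t Ht eps Heps.
    exists (eps / (D + 1)); split; [apply Rdiv_lt_0_compat; lra|].
    intros s Hs Hst; rewrite Gi by nra.
    replace (s * D - t * D) with ((s - t) * D) by ring.
    rewrite Rabs_mult, (Rabs_pos_eq D HD).
    apply Rle_lt_trans with (eps / (D + 1) * D); [apply Rmult_le_compat_r; lra|].
    replace (eps / (D + 1) * D) with (eps - eps / (D + 1)) by (field; lra).
    assert (0 < eps / (D + 1)) by (apply Rdiv_lt_0_compat; lra).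
    lra.
  - now rewrite Rmult_0_l.
  - now rewrite Rmult_1_l.
  - intros t Ht.
    rewrite <- G0 at 1; rewrite <- G1 at 1.
    rewrite !Gi by nra.
    rewrite !Rabs_left1 by nra.
    ring.
Qed.

Lemma gromov_gt_same_path_component (Hgeod : geodesic d) x0 r a b :
  gromov d x0 a b > r -> same_path_component d (ball_complement d x0 r) a b.
Proof.
  intros Hab.
  destruct (geodesic_segment_path Hgeod a b) as [p [C [P0 [P1 Hp]]]].
  exists p; repeat split; try assumption.
  intros t Ht; unfold ball_complement, closed_ball.
  pose proof (gromov_le_dist_between x0 a b (p t) (Hp t Ht)); lra.
Qed.

Lemma chain_min_snoc x0 a l c b :
  chain_min d x0 a (l ++ c :: nil) b = Rmin (chain_min d x0 a l c) (gromov d x0 c b).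
Proof.
  revert a; induction l as [|e l IH]; intros a; simpl; [reflexivity|].
  now rewrite IH, Rmin_assoc.
Qed.

Lemma chain_min_le_dist x0 a l b : chain_min d x0 a l b <= d x0 a.
Proof.
  destruct l as [|c l]; simpl; [apply gromov_le_dist|].
  eapply Rle_trans; [apply Rmin_l | apply gromov_le_dist].
Qed.

Definition chain_connected (x0 : X) (r : R) (a b : X) : Prop :=
  exists l, chain_min d x0 a l b > r.

Lemma chain_connected_refl x0 r a : d x0 a > r -> chain_connected x0 r a a.
Proof. intros Ha; exists nil; simpl; now rewrite gromov_xx. Qed.

Lemma chain_connected_snoc x0 r a b c :
  chain_connected x0 r a b -> gromov d x0 b c > r -> chain_connected x0 r a c.
Proof.
  intros [l Hl] Hbc; exists (l ++ b :: nil).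
  rewrite chain_min_snoc; now apply Rmin_glb_lt.
Qed.

Lemma chain_connected_same_path_component (Hgeod : geodesic d) x0 r a b :
  chain_connected x0 r a b -> same_path_component d (ball_complement d x0 r) a b.
Proof.
  intros [l Hl]; revert a Hl; induction l as [|c l IH]; intros a Hl; simpl in Hl.
  - now apply gromov_gt_same_path_component.
  - apply same_path_component_trans with c.
    + apply gromov_gt_same_path_component; [exact Hgeod|].
      eapply Rlt_le_trans; [exact Hl | apply Rmin_l].
    + apply IH; eapply Rlt_le_trans; [exact Hl | apply Rmin_r].
Qed.

Lemma same_path_component_chain_connected x0 r x y :
  same_path_component d (ball_complement d x0 r) x y -> chain_connected x0 r x y.
Proof.
  intros [p [C [P0 [P1 Hout]]]].
  assert (Hfar : forall t, 0 <= t <= 1 -> d x0 (p t) > r).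
  { intros t Ht; specialize (Hout t Ht); unfold ball_complement, closed_ball in Hout; lra. }
  rewrite <- P1.
  apply (unit_interval_locally_constant (fun t => chain_connected x0 r x (p t))).
  - rewrite P0; apply chain_connected_refl; rewrite <- P0; apply Hfar; lra.
  - intros t Ht.
    destruct (C t Ht (d x0 (p t) - r)) as [delta [Hdelta Hclose]];
      [pose proof (Hfar t Ht); lra|].
    exists delta; split; [exact Hdelta|].
    intros s Hs Hst; specialize (Hclose s Hs Hst).
    split; intros Hchain; eapply chain_connected_snoc; try exact Hchain.
    + now apply gromov_gt_of_close.
    + rewrite gromov_sym; now apply gromov_gt_of_close.
Qed.

Lemma gromov'_lub x0 a b : is_lub_Rbar (chain_values d x0 a b) (gromov' d x0 a b).
Proof.
  unfold gromov'.
  pose proof (Lub_Rbar_correct (chain_values d x0 a b)) as [Hub Hlub].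
  assert (Hlow : Rbar_le (chain_min d x0 a nil b) (Lub_Rbar (chain_values d x0 a b)))
    by (apply Hub; now exists nil).
  assert (Hup : Rbar_le (Lub_Rbar (chain_values d x0 a b)) (d x0 a)).
  { apply Hlub; intros v [l ->]; apply chain_min_le_dist. }
  destruct (Lub_Rbar (chain_values d x0 a b)); simpl in *; try contradiction.
  now split.
Qed.

Lemma gromov'_gt_iff x0 r a b : gromov' d x0 a b > r <-> chain_connected x0 r a b.
Proof.
  destruct (gromov'_lub x0 a b) as [Hub Hlub]; split.
  - intros Hr; apply not_all_not_ex; intros Hn.
    assert (Rbar_le (gromov' d x0 a b) r); [|simpl in *; lra].
    apply Hlub; intros v [l ->]; simpl; apply Rnot_lt_le, Hn.
  - intros [l Hl].
    assert (Rbar_le (chain_min d x0 a l b) (gromov' d x0 a b)); [|simpl in *; lra].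
    apply Hub; now exists l.
Qed.

Lemma gromov'_basepoint x0 z : gromov' d x0 x0 z = 0.
Proof.
  destruct (gromov'_lub x0 x0 z) as [Hub Hlub].
  apply Rle_antisym.
  - apply (Hlub 0); intros v [l ->]; simpl.
    rewrite <- (dist_xx x0); apply chain_min_le_dist.
  - apply (Hub 0); exists nil; simpl; unfold gromov; rewrite dist_xx; field.
Qed.

Lemma tree_gromov_eq_gromov' x0 a b : tree_gromov d x0 a b = gromov' d x0 a b.
Proof.
  unfold tree_gromov, dprime; rewrite !gromov'_basepoint, dist_xx; field.
Qed.

End Metric.

Theorem lemma6p3 (X : Type) (d : X -> X -> R) (Hmetric : is_metric d)
  (Hgeod : geodesic d) (x0 x y : X) (r : R) (hr : 0 <= r) :
  same_path_component d (ball_complement d x0 r) x y <->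
  tree_gromov d x0 x y > r.
Proof.
  rewrite tree_gromov_eq_gromov', gromov'_gt_iff by exact Hmetric.
  split.
  - apply same_path_component_chain_connected, Hmetric.
  - apply chain_connected_same_path_component; assumption.
Qed.
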